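(* Under Total Store Order, in the limit $m\to\infty$: $\Pr[L_0]=1/3$, and for every integer $\mu>0$, $\Pr[L_\mu]\ge \tfrac{4}{7}\cdot 2^{-\mu}$.
   Context: Fix $m\ge 1$. A random program is a sequence $x_1,\dots,x_{m+2}$ of memory operations, each with a type in $\{\mathrm{LD},\mathrm{ST}\}$: $x_1,\dots,x_m$ have i.i.d. types, each $\mathrm{ST}$ with probability $1/2$ and $\mathrm{LD}$ with probability $1/2$; $x_{m+1}$ (the critical load) has type $\mathrm{LD}$ and $x_{m+2}$ (the critical store) has type $\mathrm{ST}$. The initial order is $S_0=(x_1,\dots,x_{m+2})$. A memory model is specified by the set of ordered type pairs $(\tau_1,\tau_2)$ for which an instruction of type $\tau_2$ may be moved ahead of an immediately preceding instruction of type $\tau_1$: Sequential Consistency (SC) allows no pair; Total Store Order (TSO) allows only the pair $(\mathrm{ST},\mathrm{LD})$ (a load may move ahead of a preceding store); Weak Ordering (WO) allows all four pairs. The settling process runs rounds $r=1,\dots,m+2$. Before round $r$, the current order $S_{r-1}$ consists of $x_1,\dots,x_{r-1}$ in some order in positions $1,\dots,r-1$, followed by $x_r,\dots,x_{m+2}$ in positions $r,\dots,m+2$. In round $r$, instruction $x_r$ (starting at position $r$) repeatedly attempts to swap with the instruction immediately preceding it in the current order: the attempt fails automatically if the pair (type of the preceding instruction, type of $x_r$) is not allowed by the memory model, or if $x_r$ is the critical store and the preceding instruction is the critical load; otherwise the attempt succeeds independently with probability $1/2$. The round ends when an attempt fails or $x_r$ reaches position $1$; the resulting order is $S_r$. For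 an integer $\mu\ge 0$ with $\mu<m$, $L_\mu$ is the event that in the order $S_m$ (the order just before the critical load is settled) the instructions at positions $m-\mu+1,\dots,m$ all have type $\mathrm{ST}$ and the instruction at position $m-\mu$ has type $\mathrm{LD}$; i.e. exactly $\mu$ stores immediately precede the critical load in $S_m$. *)

From Stdlib Require Import Reals List Bool Arith.
Import ListNotations.
Open Scope R_scope.

Inductive typ := LD | ST.
Definition is_LD (t : typ) : bool := match t with LD => true | ST => false end.
Definition is_ST (t : typ) : bool := match t with ST => true | LD => false end.

(* Instructions: x_1..x_m are Reg, x_{m+1} critical load, x_{m+2} critical store. *)
Inductive instr := Reg (t : typ) | CritLoad | CritStore.
Definition typ_of (i : instr) : typ :=
  match i with Reg t => t | CritLoad => LD | CritStore => ST end.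

(* A memory model: allowed (tau1, tau2): tau2 may move ahead of a preceding tau1. *)
Definition model := typ -> typ -> bool.
Definition SC : model := fun _ _ => false.
Definition TSO : model := fun a b => match a, b with ST, LD => true | _, _ => false end.
Definition WO : model := fun _ _ => true.

Definition dist (A : Type) := list (R * A).
Definition ret {A} (a : A) : dist A := [(1, a)].
Definition bind {A B} (d : dist A) (f : A -> dist B) : dist B :=
  flat_map (fun pa => map (fun qb => (fst pa * fst qb, snd qb)) (f (snd pa))) d.
Definition coin {A} (d1 d2 : dist A) : dist A :=
  map (fun pa => (fst pa / 2, snd pa)) d1 ++ map (fun pa => (fst pa / 2, snd pa)) d2.
Definition prob {A} (d : dist A) (P : A -> bool) : R :=
  fold_right (fun pa acc => (if P (snd pa) then fst pa else 0) + acc) 0 d.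

Fixpoint swap_at (k : nat) (s : list instr) : list instr :=
  match k, s with
  | O, a :: b :: t => b :: a :: t
  | S k', a :: t => a :: swap_at k' t
  | _, _ => s
  end.

Definition can_swap (M : model) (prev cur : instr) : bool :=
  M (typ_of prev) (typ_of cur) &&
  negb (match prev, cur with CritLoad, CritStore => true | _, _ => false end).

(* One round: the instruction at 0-based index k repeatedly attempts to swap
   with its predecessor; automatic failure if not allowed, otherwise success
   with probability 1/2; the round ends on failure or at position 1. *)
Fixpoint settle (M : model) (k : nat) (s : list instr) : dist (list instr) :=
  match k with
  | O => ret s
  | S k' =>
      if can_swap M (nth k' s CritLoad) (nth k s CritLoad)
      then coin (ret s) (settle M k' (swap_at k' s))
      else ret s
  end.

(* Rounds r = 1..n (round r settles x_r, which sits at 0-based index r-1). *)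
Fixpoint run (M : model) (n : nat) (s : list instr) : dist (list instr) :=
  match n with
  | O => ret s
  | S n' => bind (run M n' s) (settle M n')
  end.

Fixpoint progs (m : nat) : dist (list typ) :=
  match m with
  | O => ret []
  | S m' => bind (progs m') (fun p => coin (ret (p ++ [LD])) (ret (p ++ [ST])))
  end.

Definition init (p : list typ) : list instr := map Reg p ++ [CritLoad; CritStore].

Definition S_m (M : model) (m : nat) : dist (list instr) :=
  bind (progs m) (fun p => run M m (init p)).

(* Event L_mu (requires mu < m): positions m-mu+1..m (1-based) are ST and
   position m-mu is LD, in S_m. *)
Definition L_event (m mu : nat) (s : list instr) : bool :=
  Nat.ltb mu m &&
  forallb (fun j => is_ST (typ_of (nth j s CritLoad))) (seq (m - mu) mu) &&
  is_LD (typ_of (nth (m - mu - 1) s CritLoad)).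

Definition Pr_L (M : model) (m mu : nat) : R := prob (S_m M m) (L_event m mu).

(* Under TSO only a load moves, and only past stores, so the process can be followed on
   the sequence of types.  Let T_m be the number of stores immediately preceding position m
   in S_m.  If x_(m+1) is a store it stays put and T_(m+1) = T_m + 1; if it is a load it
   passes each store in front of it with probability 1/2 until the first failure.  Hence
   u_j(m) = Pr[T_m >= j] satisfies
     u_(j+1)(m+1) = 1/2 u_j(m) + 1/2 (1/2)^(j+1) u_(j+1)(m),
   so u_j(m) converges to u_j with u_0 = 1 and u_(j+1) = 2 u_j / (4 - 2^-j).  Since
   Pr[L_mu] = u_mu(m) - u_(mu+1)(m), the limits are 1 - u_1 = 1/3 and
   u_mu (2 - 2^-mu) / (4 - 2^-mu) >= 3/7 u_mu >= 4/7 2^-mu for mu > 0. *)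

From Pilot Require Import Defs.
From Stdlib Require Import Reals Lra Lia List Bool.
Import ListNotations.
Open Scope R_scope.

Definition expect {A} (d : Defs.dist A) (g : A -> R) : R :=
  fold_right (fun pa acc => fst pa * g (snd pa) + acc) 0 d.

Definition ind (b : bool) : R := if b then 1 else 0.

Section Expectation.

Context {A : Type}.
Implicit Types (d : Defs.dist A) (f g : A -> R).

Lemma expect_ret (a : A) g : expect (ret a) g = g a.
Proof. unfold ret, expect; simpl; ring. Qed.

Lemma expect_app d1 d2 g : expect (d1 ++ d2) g = expect d1 g + expect d2 g.
Proof. induction d1 as [|a t IH]; simpl; [ring | rewrite IH; ring]. Qed.

Lemma expect_coin d1 d2 g : expect (coin d1 d2) g = (expect d1 g + expect d2 g) / 2.
Proof.
  assert (half : forall d, expect (map (fun pa => (fst pa / 2, snd pa)) d) g = expect d g / 2).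
  { induction d as [|a t IH]; simpl; [field | rewrite IH; field]. }
  unfold coin; rewrite expect_app, !half; field.
Qed.

Lemma expect_lin d c e f g :
  expect d (fun a => c * f a + e * g a) = c * expect d f + e * expect d g.
Proof. induction d as [|a t IH]; simpl; [ring | rewrite IH; ring]. Qed.

Lemma expect_avg d f g : (expect d f + expect d g) / 2 = expect d (fun a => (f a + g a) / 2).
Proof. induction d as [|a t IH]; simpl; [field | rewrite <- IH; field]. Qed.

Lemma expect_sub d f g : expect d (fun a => f a - g a) = expect d f - expect d g.
Proof. induction d as [|a t IH]; simpl; [ring | rewrite IH; ring]. Qed.

Lemma eq_expect_in d f g :
  (forall pa, In pa d -> f (snd pa) = g (snd pa)) -> expect d f = expect d g.
Proof.
  induction d as [|a t IH]; intros Hfg; simpl; [reflexivity|].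
  rewrite (Hfg a (or_introl eq_refl)), IH; [reflexivity|].
  intros pa Hpa; apply Hfg; right; exact Hpa.
Qed.

Lemma prob_expect d P : prob d P = expect d (fun a => ind (P a)).
Proof.
  induction d as [|a t IH]; simpl; [reflexivity|].
  rewrite IH; unfold ind; destruct (P (snd a)); ring.
Qed.

Lemma in_coin d1 d2 pa :
  In pa (coin d1 d2) -> exists pb, snd pa = snd pb /\ (In pb d1 \/ In pb d2).
Proof.
  unfold coin; intros Hin; apply in_app_or in Hin.
  destruct Hin as [Hin|Hin]; apply in_map_iff in Hin; destruct Hin as [pb [<- Hpb]];
    exists pb; simpl; auto.
Qed.

End Expectation.

Lemma expect_bind {A B : Type} (d : Defs.dist A) (k : A -> Defs.dist B) (g : B -> R) :
  expect (bind d k) g = expect d (fun a => expect (k a) g).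
Proof.
  assert (scale : forall p (e : Defs.dist B),
             expect (map (fun qb => (p * fst qb, snd qb)) e) g = p * expect e g).
  { induction e as [|b t IH]; simpl; [ring | rewrite IH; ring]. }
  unfold bind; induction d as [|a t IH]; simpl; [reflexivity|].
  rewrite expect_app, scale, IH; reflexivity.
Qed.

Lemma in_bind {A B} (d : Defs.dist A) (k : A -> Defs.dist B) pb :
  In pb (bind d k) -> exists pa pc, In pa d /\ In pc (k (snd pa)) /\ snd pb = snd pc.
Proof.
  unfold bind; intros Hin; apply in_flat_map in Hin; destruct Hin as [pa [Hpa Hpc]].
  apply in_map_iff in Hpc; destruct Hpc as [pc [<- Hpc]]; exists pa, pc; simpl; auto.
Qed.

Fixpoint swapT (k : nat) (l : list typ) : list typ :=
  match k, l with
  | O, a :: b :: t => b :: a :: t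
  | S k', a :: t => a :: swapT k' t
  | _, _ => l
  end.

Section TypeProjection.

Variable M : model.
Hypothesis M_LD_ST : M LD ST = false.

Fixpoint settleT (k : nat) (l : list typ) : Defs.dist (list typ) :=
  match k with
  | O => ret l
  | S k' => if M (nth k' l LD) (nth k l LD)
            then coin (ret l) (settleT k' (swapT k' l)) else ret l
  end.

Fixpoint runT (n : nat) (l : list typ) : Defs.dist (list typ) :=
  match n with O => ret l | S n' => bind (runT n' l) (settleT n') end.

Lemma map_typ_swap_at k s : map typ_of (swap_at k s) = swapT k (map typ_of s).
Proof.
  revert s; induction k; intros [|a [|b t]]; simpl; auto; rewrite IHk; reflexivity.
Qed.

(* The critical-pair exception of [can_swap] is subsumed by [M LD ST = false]. *)
Lemma can_swapE a b : can_swap M a b = M (typ_of a) (typ_of b).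
Proof.
  unfold can_swap; destruct a as [[]| |], b as [[]| |]; simpl;
    rewrite ?andb_true_r, ?andb_false_r, ?M_LD_ST; reflexivity.
Qed.

Lemma typ_of_nth k s : typ_of (nth k s CritLoad) = nth k (map typ_of s) LD.
Proof. exact (eq_sym (map_nth typ_of s CritLoad k)). Qed.

Lemma expect_settle_typ k : forall s (g : list typ -> R),
  expect (settle M k s) (fun s' => g (map typ_of s')) = expect (settleT k (map typ_of s)) g.
Proof.
  induction k; intros s g; cbn [settle settleT]; [rewrite !expect_ret; reflexivity|].
  rewrite can_swapE, !typ_of_nth.
  destruct (M (nth k _ LD) _); rewrite ?expect_coin, !expect_ret;
    [rewrite IHk, map_typ_swap_at|]; reflexivity.
Qed.

Lemma expect_run_typ n : forall s (g : list typ -> R),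
  expect (run M n s) (fun s' => g (map typ_of s')) = expect (runT n (map typ_of s)) g.
Proof.
  induction n; intros s g; cbn [run runT]; [rewrite !expect_ret; reflexivity|].
  rewrite !expect_bind, <- IHn; apply eq_expect_in; intros; apply expect_settle_typ.
Qed.

Lemma swapT_length k l : length (swapT k l) = length l.
Proof. revert l; induction k; intros [|a [|b t]]; simpl; auto. Qed.

Lemma settleT_length k : forall l pa, In pa (settleT k l) -> length (snd pa) = length l.
Proof.
  induction k; intros l pa Hin; simpl in Hin; [destruct Hin as [<-|[]]; reflexivity|].
  destruct (M (nth k _ LD) _); [|destruct Hin as [<-|[]]; reflexivity].
  apply in_coin in Hin; destruct Hin as [pb [-> [[<-|[]]|Hin]]]; [reflexivity|].
  rewrite (IHk _ _ Hin); apply swapT_length.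
Qed.

Lemma runT_length n : forall l pa, In pa (runT n l) -> length (snd pa) = length l.
Proof.
  induction n; intros l pa Hin; simpl in Hin; [destruct Hin as [<-|[]]; reflexivity|].
  apply in_bind in Hin; destruct Hin as [pb [pc [Hpb [Hpc ->]]]].
  rewrite (settleT_length _ _ _ Hpc); exact (IHn _ _ Hpb).
Qed.

Lemma settleT_mass k : forall l, expect (settleT k l) (fun _ => 1) = 1.
Proof.
  induction k; intros l; cbn [settleT]; [exact (expect_ret l _)|].
  destruct (M (nth k _ LD) _); rewrite ?expect_coin, expect_ret, ?IHk; field.
Qed.

Lemma runT_mass n : forall l, expect (runT n l) (fun _ => 1) = 1.
Proof.
  induction n; intros l; cbn [runT]; [exact (expect_ret l _)|].
  rewrite expect_bind, (eq_expect_in _ _ (fun _ => 1)); [apply IHn | intros; apply settleT_mass].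
Qed.

Lemma swapT_app k : forall l b, (S k < length l)%nat -> swapT k (l ++ b) = swapT k l ++ b.
Proof.
  induction k; intros l b Hk; destruct l as [|a [|c t]]; simpl in *; try lia; auto.
  rewrite <- (IHk (c :: t) b); [reflexivity | simpl; lia].
Qed.

Lemma expect_settleT_app k : forall l b (g : list typ -> R), (k < length l)%nat ->
  expect (settleT k (l ++ b)) g = expect (settleT k l) (fun l' => g (l' ++ b)).
Proof.
  induction k; intros l b g Hk; cbn [settleT]; [rewrite !expect_ret; reflexivity|].
  rewrite !app_nth1 by lia.
  destruct (M (nth k _ LD) _); rewrite ?expect_coin, !expect_ret; [|reflexivity].
  rewrite swapT_app, IHk by (rewrite ?swapT_length; lia); reflexivity.
Qed.

Lemma expect_runT_app n : forall l b (g : list typ -> R), (n <= length l)%nat ->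
  expect (runT n (l ++ b)) g = expect (runT n l) (fun l' => g (l' ++ b)).
Proof.
  induction n; intros l b g Hn; cbn [runT]; [rewrite !expect_ret; reflexivity|].
  rewrite !expect_bind, IHn by lia; apply eq_expect_in; intros pa Hpa.
  apply expect_settleT_app; rewrite (runT_length _ _ _ Hpa); lia.
Qed.

End TypeProjection.

Lemma progs_length m : forall pa, In pa (progs m) -> length (snd pa) = m.
Proof.
  induction m; intros pa Hin; simpl in Hin; [destruct Hin as [<-|[]]; reflexivity|].
  apply in_bind in Hin; destruct Hin as [pb [pc [Hpb [Hpc ->]]]].
  apply in_coin in Hpc; destruct Hpc as [pd [-> [[<-|[]]|[<-|[]]]]];
    simpl; rewrite length_app, (IHm _ Hpb); simpl; lia.
Qed.

Lemma progs_mass m : expect (progs m) (fun _ => 1) = 1.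
Proof.
  induction m; cbn [progs]; [exact (expect_ret [] _)|].
  rewrite expect_bind, (eq_expect_in _ _ (fun _ => 1)); [exact IHm|].
  intros; rewrite expect_coin, !expect_ret; field.
Qed.

(* Number of ST immediately preceding 0-based index n; indices beyond the list read as LD. *)
Fixpoint trailing_st (l : list typ) (n : nat) : nat :=
  match n with
  | O => O
  | S n' => match nth n' l LD with ST => S (trailing_st l n') | LD => O end
  end.

Lemma trailing_st_app n l b : (n <= length l)%nat -> trailing_st (l ++ b) n = trailing_st l n.
Proof.
  revert l; induction n; intros l Hn; [reflexivity|].
  simpl; rewrite app_nth1, IHn by lia; reflexivity.
Qed.

Lemma trailing_st_snoc l y b :
  trailing_st (l ++ y :: b) (S (length l)) =
  match y with ST => S (trailing_st l (length l)) | LD => O end.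
Proof. simpl; rewrite nth_middle, trailing_st_app by lia; reflexivity. Qed.

Lemma eqb_trailing_st (s : list instr) m mu : (mu < m)%nat ->
  forallb (fun j => is_ST (typ_of (nth j s CritLoad))) (seq (m - mu) mu) &&
  is_LD (typ_of (nth (m - mu - 1) s CritLoad)) = (trailing_st (map typ_of s) m =? mu).
Proof.
  revert mu; induction m as [|n IH]; intros mu Hmu; [lia|].
  cbn [trailing_st]; rewrite <- typ_of_nth.
  destruct mu as [|mu'].
  - replace (S n - 0 - 1)%nat with n by lia.
    destruct (typ_of (nth n s CritLoad)); reflexivity.
  - replace (S n - S mu')%nat with (n - mu')%nat by lia.
    rewrite seq_S, forallb_app; replace (n - mu' + mu')%nat with n by lia.
    destruct (typ_of (nth n s CritLoad)) eqn:Hn; simpl; rewrite Hn; simpl.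
    + rewrite andb_false_r; reflexivity.
    + rewrite andb_true_r; apply IH; lia.
Qed.

Lemma L_event_trailing m mu s : (mu < m)%nat ->
  L_event m mu s = (trailing_st (map typ_of s) m =? mu).
Proof.
  intros Hmu; unfold L_event; rewrite (proj2 (Nat.ltb_lt mu m) Hmu), <- andb_assoc.
  exact (eqb_trailing_st s m mu Hmu).
Qed.

Lemma nth_middle_succ {A} (l t : list A) a b d : nth (S (length l)) (l ++ a :: b :: t) d = b.
Proof. induction l; simpl; auto. Qed.

Lemma settleT_TSO_ST l rest :
  settleT TSO (length l) (l ++ ST :: rest) = ret (l ++ ST :: rest).
Proof.
  destruct l as [|a l0] using rev_ind; [reflexivity|].
  rewrite length_app, Nat.add_1_r; cbn [settleT].
  rewrite <- app_assoc; simpl ([a] ++ _); rewrite nth_middle, nth_middle_succ.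
  destruct a; reflexivity.
Qed.

Lemma swapT_middle (l : list typ) a b t : swapT (length l) (l ++ a :: b :: t) = l ++ b :: a :: t.
Proof. induction l; simpl; [reflexivity | rewrite IHl; reflexivity]. Qed.

Lemma settleT_TSO_LD l rest i :
  expect (settleT TSO (length l) (l ++ LD :: rest))
         (fun l' => ind (i <=? trailing_st l' (S (length l)))) =
  ind (i <=? trailing_st l (length l)) * (1/2) ^ i.
Proof.
  revert rest i; induction l as [|y l0 IH] using rev_ind; intros rest i.
  - cbn [length app settleT]; rewrite expect_ret; destruct i; simpl; ring.
  - rewrite length_app, Nat.add_1_r; cbn [settleT].
    rewrite <- app_assoc; simpl ([y] ++ _).
    rewrite nth_middle, nth_middle_succ, trailing_st_snoc.
    assert (stuck : trailing_st (l0 ++ y :: LD :: rest) (S (S (length l0))) = O).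
    { simpl; rewrite nth_middle_succ; reflexivity. }
    destruct y; cbn [TSO nth].
    { rewrite expect_ret, stuck; destruct i; simpl; ring. }
    rewrite expect_coin, expect_ret, stuck, swapT_middle.
    replace (l0 ++ LD :: ST :: rest) with ((l0 ++ [LD]) ++ ST :: rest)
      by (rewrite <- app_assoc; reflexivity).
    rewrite expect_settleT_app by (rewrite length_app; simpl; lia).
    destruct i as [|i']; simpl (ind (0 <=? _)).
    { rewrite settleT_mass; field. }
    rewrite (eq_expect_in _ _ (fun l' => ind (i' <=? trailing_st l' (S (length l0))))), IH.
    + simpl; field.
    + intros pa Hpa; pose proof (settleT_length _ _ _ _ Hpa) as Hlen.
      rewrite length_app, Nat.add_1_r in Hlen; rewrite <- Hlen, trailing_st_snoc; reflexivity.
Qed.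

Definition tail_prob (m i : nat) : R :=
  expect (progs m) (fun p => expect (runT TSO m p) (fun l => ind (i <=? trailing_st l m))).

Lemma tail_prob_0 m : tail_prob m 0 = 1.
Proof.
  unfold tail_prob; simpl (ind (0 <=? _)).
  rewrite (eq_expect_in _ _ (fun _ => 1)); [apply progs_mass|].
  intros; apply runT_mass; reflexivity.
Qed.

Lemma tail_prob_rec m j :
  tail_prob (S m) (S j) = (1/2) ^ S j / 2 * tail_prob m (S j) + / 2 * tail_prob m j.
Proof.
  unfold tail_prob; rewrite <- expect_lin; cbn [progs]; rewrite expect_bind.
  apply eq_expect_in; intros pa Hpa; pose proof (progs_length _ _ Hpa) as Hp.
  rewrite expect_coin, !expect_ret; cbn [runT]; rewrite !expect_bind.
  rewrite !expect_runT_app, <- !expect_lin by (rewrite ?Hp; lia).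
  rewrite expect_avg; apply eq_expect_in; intros pb Hpb.
  pose proof (runT_length _ _ _ _ Hpb) as Hlen; rewrite Hp in Hlen.
  rewrite <- Hlen, settleT_TSO_LD, settleT_TSO_ST, expect_ret, trailing_st_snoc; simpl.
  field.
Qed.

Lemma init_typ p : map typ_of (init p) = p ++ [LD; ST].
Proof. unfold init; rewrite map_app, map_map, map_id; reflexivity. Qed.

Lemma ind_eqb_leb t mu : ind (t =? mu) = ind (mu <=? t) - ind (S mu <=? t).
Proof.
  unfold ind; destruct (Nat.eqb_spec t mu), (Nat.leb_spec mu t), (Nat.leb_spec (S mu) t);
    try lia; ring.
Qed.

Lemma Pr_L_tail_prob m mu : (mu < m)%nat -> Pr_L TSO m mu = tail_prob m mu - tail_prob m (S mu).
Proof.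
  intros Hmu; unfold Pr_L, S_m, tail_prob.
  rewrite prob_expect, expect_bind, <- expect_sub; apply eq_expect_in; intros pa Hpa.
  rewrite (eq_expect_in _ _ (fun s => ind (trailing_st (map typ_of s) m =? mu)))
    by (intros; rewrite L_event_trailing by exact Hmu; reflexivity).
  rewrite (expect_run_typ _ eq_refl _ _ (fun l => ind (trailing_st l m =? mu))), init_typ.
  rewrite expect_runT_app by (rewrite (progs_length _ _ Hpa); lia).
  rewrite <- expect_sub; apply eq_expect_in; intros pb Hpb.
  rewrite trailing_st_app, ind_eqb_leb; [reflexivity|].
  rewrite (runT_length _ _ _ _ Hpb), (progs_length _ _ Hpa); lia.
Qed.

Lemma Un_cv_cst (c : R) : Un_cv (fun _ => c) c.
Proof.
  intros eps Heps; exists O; intros; unfold R_dist; rewrite Rminus_diag, Rabs_R0; exact Heps.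
Qed.

Section AffineRecurrence.

Variables (x y : nat -> R) (c ly : R).
Hypotheses (c_ge0 : 0 <= c) (c_lt1 : c < 1) (x_rec : forall n, x (S n) = c * x n + y n).

Let L := ly / (1 - c).

Lemma affine_rec_dist N d : (forall n, (N <= n)%nat -> Rabs (y n - ly) <= d) ->
  forall k, Rabs (x (N + k)%nat - L) <= c ^ k * Rabs (x N - L) + d / (1 - c).
Proof.
  intros Hy; assert (Hd : 0 <= d / (1 - c)).
  { apply Rmult_le_pos; [exact (Rle_trans _ _ _ (Rabs_pos _) (Hy N (le_n N)))|].
    apply Rlt_le, Rinv_0_lt_compat; lra. }
  induction k as [|k IH]; [rewrite Nat.add_0_r; simpl; lra|].
  rewrite Nat.add_succ_r, x_rec.
  replace (c * x (N + k)%nat + y (N + k)%nat - L)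
    with (c * (x (N + k)%nat - L) + (y (N + k)%nat - ly)) by (unfold L; field; lra).
  eapply Rle_trans; [apply Rabs_triang|]; rewrite Rabs_mult, (Rabs_right c) by lra.
  specialize (Hy (N + k)%nat ltac:(lia)).
  apply (Rmult_le_compat_l c) in IH; [|lra].
  replace (c ^ S k * Rabs (x N - L) + d / (1 - c))
    with (c * (c ^ k * Rabs (x N - L) + d / (1 - c)) + d) by (simpl; field; lra).
  lra.
Qed.

Lemma Un_cv_affine_rec : Un_cv y ly -> Un_cv x L.
Proof.
  intros Hy eps Heps.
  destruct (Hy (eps * (1 - c) / 2)) as [N1 HN1]; [apply Rdiv_lt_0_compat; nra|].
  pose proof (affine_rec_dist N1 (eps * (1 - c) / 2)
                (fun n Hn => Rlt_le _ _ (HN1 n Hn))) as Hdist.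
  set (A := Rabs (x N1 - L)) in Hdist.
  assert (HA : 0 <= A) by apply Rabs_pos.
  destruct (pow_lt_1_zero c ltac:(rewrite Rabs_right; lra) (eps / 2 / (A + 1)))
    as [N2 HN2]; [apply Rdiv_lt_0_compat; lra|].
  exists (N1 + N2)%nat; intros n Hn; unfold R_dist.
  replace n with (N1 + (n - N1))%nat by lia.
  specialize (HN2 (n - N1)%nat ltac:(lia)).
  rewrite Rabs_right in HN2 by (apply Rle_ge, pow_le; lra).
  apply (Rmult_lt_compat_r (A + 1)) in HN2; [|lra].
  replace (eps / 2 / (A + 1) * (A + 1)) with (eps / 2) in HN2 by (field; lra).
  replace (eps * (1 - c) / 2 / (1 - c)) with (eps / 2) in Hdist by (field; lra).
  specialize (Hdist (n - N1)%nat).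
  assert (0 <= c ^ (n - N1)) by (apply pow_le; lra).
  nra.
Qed.

End AffineRecurrence.

Fixpoint tail_limit (j : nat) : R :=
  match j with
  | O => 1
  | S j' => / 2 * tail_limit j' / (1 - (1/2) ^ S j' / 2)
  end.

Lemma pow_half_bounds n : 0 < (1/2) ^ n <= 1.
Proof. induction n; simpl; [lra | split; [apply Rmult_lt_0_compat|]; lra]. Qed.

Lemma tail_prob_cv j : Un_cv (fun m => tail_prob m j) (tail_limit j).
Proof.
  induction j as [|j IH].
  - apply (Un_cv_ext (fun _ => 1)); [intros; symmetry; apply tail_prob_0 | apply Un_cv_cst].
  - pose proof (pow_half_bounds (S j)).
    apply (Un_cv_affine_rec _ (fun m => / 2 * tail_prob m j));
      [lra | lra | intros; apply tail_prob_rec|].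
    exact (CV_mult _ _ _ _ (Un_cv_cst (/ 2)) IH).
Qed.

Lemma tail_limit_S mu : tail_limit (S mu) = tail_limit mu * (2 / (4 - (1/2) ^ mu)).
Proof. pose proof (pow_half_bounds mu); simpl; field; lra. Qed.

Lemma tail_limit_pos mu : 0 < tail_limit mu.
Proof.
  induction mu as [|mu IH]; [simpl; lra|].
  pose proof (pow_half_bounds mu); rewrite tail_limit_S.
  apply Rmult_lt_0_compat; [exact IH | apply Rdiv_lt_0_compat; lra].
Qed.

Lemma tail_limit_lower mu : (0 < mu)%nat -> 4 / 3 * (1/2) ^ mu <= tail_limit mu.
Proof.
  induction mu as [|[|mu] IH]; intros Hmu; [lia | simpl; lra|].
  specialize (IH ltac:(lia)); pose proof (pow_half_bounds (S mu)).
  rewrite tail_limit_S; change ((1/2) ^ S (S mu)) with (1/2 * (1/2) ^ S mu).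
  set (q := (1/2) ^ S mu) in *.
  assert (1 / 2 <= 2 / (4 - q)).
  { unfold Rdiv; apply (Rmult_le_reg_r (4 - q)); [lra|].
    rewrite (Rmult_assoc 2), Rinv_l by lra; lra. }
  pose proof (tail_limit_pos (S mu)); nra.
Qed.

Lemma Pr_L_cv mu : Un_cv (fun m => Pr_L TSO m mu) (tail_limit mu - tail_limit (S mu)).
Proof.
  apply (CV_shift _ (S mu)),
    (Un_cv_ext (fun n => tail_prob (n + S mu) mu - tail_prob (n + S mu) (S mu))).
  - intros n; symmetry; apply Pr_L_tail_prob; lia.
  - apply (CV_shift' (fun m => tail_prob m mu - tail_prob m (S mu))), CV_minus;
      apply tail_prob_cv.
Qed.

Theorem lemma1 :
  Un_cv (fun m => Pr_L TSO m 0) (1 / 3) /\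
  (forall mu : nat, (0 < mu)%nat ->
     exists l : R, Un_cv (fun m => Pr_L TSO m mu) l /\ l >= 4 / 7 * (1 / 2) ^ mu).
Proof.
  split.
  - replace (1 / 3) with (tail_limit 0 - tail_limit 1) by (simpl; field).
    apply Pr_L_cv.
  - intros mu Hmu; exists (tail_limit mu - tail_limit (S mu)); split; [apply Pr_L_cv|].
    pose proof (tail_limit_lower mu Hmu).
    assert ((1/2) ^ mu <= 1/2)
      by (destruct mu as [|mu]; [lia|]; pose proof (pow_half_bounds mu); simpl; lra).
    rewrite tail_limit_S; set (q := (1/2) ^ mu) in *.
    assert (2 / (4 - q) <= 4 / 7).
    { unfold Rdiv; apply (Rmult_le_reg_r (4 - q)); [lra|].
      rewrite Rmult_assoc, Rinv_l by lra; lra. }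
    pose proof (tail_limit_pos mu); apply Rle_ge; nra.
Qed.
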